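(* Let $T$ be a table over schema $U$ with $|T|=n$ and $|U|=m$, let $k,l$ be dimensions with $l\le m$, and let $\mathcal{R}$ be a set of association rules over $T$. Consider the following algorithm. For every subset $U'\subseteq U$ with $|U'|=l$, let $T'$ be the projection of $T$ onto $U'$, and run greedy row selection on $T'$: starting from the empty sub-table, repeat $k$ times: among all tuples of $T'$ not yet selected, add to the current sub-table one whose addition yields the largest cell coverage $\mathrm{cellCov}_{\mathcal{R}}(T,\cdot)$. Among the resulting sub-tables (one per choice of $U'$), output one with the maximal cell coverage. Then the output is a $k\times l$ sub-table $T_{sub}$ of $T$ satisfying $\mathrm{cellCov}_{\mathcal{R}}(T,T_{sub})\geq(1-\frac{1}{e})\,\mathrm{OPT}$, where $\mathrm{OPT}$ is the maximum of $\mathrm{cellCov}_{\mathcal{R}}(T,S)$ over all $k\times l$ sub-tables $S$ of $T$ (the optimal value of the Max-Cell-Cover problem).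
   Context: A schema $U=\{u_1,\dots,u_{|U|}\}$ is a finite set of columns; each column $u_i$ has a domain $\mathcal{D}_i$ of allowed values. A table $T$ over $U$ is a finite set of tuples $t$, each assigning a value $t(u_i)\in\mathcal{D}_i$ to every column $u_i$; the pair $\langle t,u\rangle$ is a cell. A sub-table $T_{sub}$ of $T$ is a table over some schema $U_{sub}\subseteq U$ such that each tuple of $T_{sub}$ is the projection of some tuple of $T$ onto $U_{sub}$; it is of size $k\times l$ if it has $k$ tuples and $|U_{sub}|=l$. An association rule $R$ has the form $\{(u_1,v_1),\dots,(u_{r},v_{r})\}\rightarrow\{(u_{r+1},v_{r+1}),\dots,(u_{r+p},v_{r+p})\}$ with $u_i\in U$ and $v_i\in\mathcal{D}_i$; $U_R=\{u_1,\dots,u_{r+p}\}$ is its set of columns. $R$ holds for a tuple $t$ if $t(u_i)=v_i$ for all $1\le i\le r+p$; $T_R$ is the set of tuples of $T$ for which $R$ holds. A rule $R\in\mathcal{R}$ is covered by $T_{sub}$ if $U_R\subseteq U_{sub}$ and $R$ holds for some tuple of $T_{sub}$; let $\mathcal{R}_{sub}$ be the set of covered rules. Let $\mathrm{cell}(R,T)=\{\langle t,u\rangle : t\in T_R,\ u\in U_R\}$. The cell coverage is $\mathrm{cellCov}_{\mathcal{R}}(T,T_{sub})=\frac{1}{\mathrm{upcov}}\left|\bigcup_{R\in\mathcal{R}_{sub}}\mathrm{cell}(R,T)\right|$, where $\mathrm{upcov}=\left|\bigcup_{R\in\mathcal{R}}\mathrm{cell}(R,T)\right|$. Max-Cell-Cover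 is the problem of finding a $k\times l$ sub-table of $T$ with maximal cell coverage. *)

From HB Require Import structures.
From mathcomp Require Import all_boot all_order all_algebra.
From mathcomp Require Import reals sequences exp.
Set Implicit Arguments. Unset Strict Implicit. Unset Printing Implicit Defensive.
Import Order.TTheory GRing.Theory Num.Theory.
Local Open Scope ring_scope.

(* Columns form a finite type [col] (the schema U, m = #|col|); values live in
   an eqType [V].  A table T with n tuples is given by an injective map
   tab : 'I_n -> {ffun col -> V} (injectivity = T is a set of n tuples).
   A cell <t,u> of T is identified with a pair (i, u) : 'I_n * col. *)

Record rule (col : finType) (V : eqType) := Rule {
  lhs : seq (col * V);
  rhs : seq (col * V) }.

Definition rule_pairs (col : finType) (V : eqType) (r : rule col V) :=
  lhs r ++ rhs r.

Definition UR (col : finType) (V : eqType) (r : rule col V) : {set col} :=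
  [set u | u \in [seq uv.1 | uv <- rule_pairs r]].

Definition holds (col : finType) (V : eqType) (r : rule col V)
  (t : {ffun col -> V}) : bool :=
  all (fun uv => t uv.1 == uv.2) (rule_pairs r).

(* A tuple over a sub-schema U_sub is a finite function col -> option V which
   is defined (Some) exactly on U_sub.  Projection of t onto Us: *)
Definition proj (col : finType) (V : eqType) (Us : {set col})
  (t : {ffun col -> V}) : {ffun col -> option V} :=
  [ffun u => if u \in Us then Some (t u) else None].

Definition holds_sub (col : finType) (V : eqType) (r : rule col V)
  (p : {ffun col -> option V}) : bool :=
  all (fun uv => p uv.1 == Some uv.2) (rule_pairs r).

Definition cell (col : finType) (V : eqType) (n : nat)
  (tab : 'I_n -> {ffun col -> V}) (r : rule col V) : {set 'I_n * col} :=
  [set iu | holds r (tab iu.1) && (iu.2 \in UR r)].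

Definition covered (col : finType) (V : eqType) (r : rule col V)
  (Us : {set col}) (rows : seq {ffun col -> option V}) : bool :=
  (UR r \subset Us) && has (holds_sub r) rows.

Definition cellCov (R : realType) (col : finType) (V : eqType) (n : nat)
  (tab : 'I_n -> {ffun col -> V}) (rs : seq (rule col V))
  (Us : {set col}) (rows : seq {ffun col -> option V}) : R :=
  (#|\bigcup_(r <- rs | covered r Us rows) cell tab r|)%:R /
  (#|\bigcup_(r <- rs) cell tab r|)%:R.

(* (Us, rows) is a k x l sub-table of T: schema Us with |Us| = l, and rows a
   duplicate-free list (i.e. a set) of k tuples, each the projection onto Us
   of some tuple of T. *)
Definition is_subtable (col : finType) (V : eqType) (n : nat)
  (tab : 'I_n -> {ffun col -> V}) (k l : nat)
  (Us : {set col}) (rows : seq {ffun col -> option V}) : Prop :=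
  [/\ #|Us| = l, uniq rows, size rows = k &
      forall p, p \in rows -> exists i : 'I_n, p = proj Us (tab i)].

Definition projT (col : finType) (V : eqType) (n : nat)
  (tab : 'I_n -> {ffun col -> V}) (Us : {set col}) :=
  [seq proj Us (tab i) | i <- enum 'I_n].

Definition greedy_step (R : realType) (col : finType) (V : eqType) (n : nat)
  (tab : 'I_n -> {ffun col -> V}) (rs : seq (rule col V)) (Us : {set col})
  (S : seq {ffun col -> option V}) (p : {ffun col -> option V}) : Prop :=
  [/\ p \in projT tab Us, p \notin S &
      forall q, q \in projT tab Us -> q \notin S ->
        cellCov R tab rs Us (rcons S q) <= cellCov R tab rs Us (rcons S p)].

(* rows is a possible result (ties broken arbitrarily) of k rounds of greedy
   row selection on T' = projection of T onto Us, starting from empty *)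
Definition greedy_run (R : realType) (col : finType) (V : eqType) (n : nat)
  (tab : 'I_n -> {ffun col -> V}) (rs : seq (rule col V)) (k : nat)
  (Us : {set col}) (rows : seq {ffun col -> option V}) : Prop :=
  size rows = k /\
  forall i, (i < k)%N ->
    greedy_step R tab rs Us (take i rows) (nth [ffun => None] rows i).

(* the column sets U' considered by the algorithm: |U'| = l and the greedy
   selection can perform k rounds (T' has at least k distinct tuples) *)
Definition feasible_cols (col : finType) (V : eqType) (n : nat)
  (tab : 'I_n -> {ffun col -> V}) (k l : nat) (Us : {set col}) : bool :=
  (#|Us| == l) && (k <= size (undup (projT tab Us)))%N.

From HB Require Import structures.
From mathcomp Require Import all_boot all_order all_algebra.
From mathcomp Require Import reals sequences exp.
From mathcomp Require Import zify lra.
Set Implicit Arguments. Unset Strict Implicit. Unset Printing Implicit Defensive.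
Import Order.TTheory GRing.Theory Num.Theory.
Local Open Scope ring_scope.

(* For a fixed schema U', the cells covered by a set of rows are the union of
   the cells covered by the single rows, so cell coverage is a scaled
   maximum-coverage objective, monotone and submodular.  By submodularity the
   greedy row closes at least a 1/k fraction of the remaining gap to any k-row
   selection, so after k rounds the gap is at most (1 - 1/k)^k <= 1/e of it.
   The algorithm tries every admissible U', in particular the schema of an
   optimal k x l sub-table, whose rows are k rows of the corresponding T'. *)

Lemma in_bigcup_seq (I : Type) (X : finType) (s : seq I) (P : pred I)
    (F : I -> {set X}) (x : X) :
  (x \in \bigcup_(i <- s | P i) F i) = has (fun i => P i && (x \in F i)) s.
Proof.
by rewrite (big_morph _ (fun A B => in_setU x A B) (in_set0 x)) big_has_cond.
Qed.

Lemma has_comm (I J : Type) (P : I -> J -> bool) (s : seq I) (t : seq J) :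
  has (fun i => has (P i) t) s = has (fun j => has (P^~ j) s) t.
Proof.
elim: s => [|i s IH] /=; first by elim: t.
by rewrite IH -has_predU; apply: eq_has.
Qed.

Lemma uniq_nth_notin_take (T : eqType) (x0 : T) (s : seq T) :
  (forall i, (i < size s)%N -> nth x0 s i \notin take i s) -> uniq s.
Proof.
move=> fresh; rewrite -(take_size s).
suff: forall i, (i <= size s)%N -> uniq (take i s) by apply.
elim=> [|i IH] lt_is; first by rewrite take0.
by rewrite (take_nth x0 lt_is) rcons_uniq fresh // IH // ltnW.
Qed.

Lemma expr_1subVn_le_inv_expR1 (R : realType) (k : nat) : (0 < k)%N ->
  (1 - (k%:R : R)^-1) ^+ k <= (expR 1)^-1.
Proof.
move=> k_gt0.
have k_neq0 : (k%:R : R) != 0 by rewrite pnatr_eq0 -lt0n.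
have q_ge0 : 0 <= 1 - (k%:R : R)^-1 by rewrite subr_ge0 invf_le1 ?ler1n ?ltr0n.
apply: (@le_trans _ _ (expR (- (k%:R : R)^-1) ^+ k)).
  by apply: lerXn2r; rewrite ?nnegrE ?expR_ge0 // expR_ge1Dx.
by rewrite -expRM_natr mulNr mulVf // expRN.
Qed.

Lemma greedy_recurrence_bound (R : realType) (k : nat) (opt : R)
    (x : nat -> R) :
  (0 < k)%N -> 0 <= opt -> x 0%N = 0 ->
  (forall i, (i < k)%N -> opt + k%:R * x i <= x i + k%:R * x i.+1) ->
  (1 - (expR 1)^-1) * opt <= x k.
Proof.
move=> k_gt0 opt_ge0 x0 gain.
set q := 1 - (k%:R : R)^-1.
have k_gt0R : (0 : R) < k%:R by rewrite ltr0n.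
have q_ge0 : 0 <= q by rewrite subr_ge0 invf_le1 ?ler1n.
have kq : k%:R * q = k%:R - 1 by rewrite mulrBr mulr1 mulfV ?gt_eqF.
have gap i : (i <= k)%N -> opt - x i <= q ^+ i * opt.
  elim: i => [|i IH] lt_ik; first by rewrite x0 subr0 expr0 mul1r.
  rewrite exprS -mulrA; apply: le_trans (ler_wpM2l q_ge0 (IH (ltnW lt_ik))).
  rewrite -(ler_pM2l k_gt0R) mulrA kq.
  by move: (gain i lt_ik); nra.
have qk_le := @expr_1subVn_le_inv_expR1 R k k_gt0.
have := ler_wpM2r opt_ge0 qk_le; have := gap k (leqnn k); lra.
Qed.

Section Coverage.
Context {T : eqType} {X : finType} (A : T -> {set X}).

Definition cover (S : seq T) : {set X} := \bigcup_(p <- S) A p.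

Lemma cover_nil : cover [::] = set0.
Proof. exact: big_nil. Qed.

Lemma cover_rcons S p : cover (rcons S p) = cover S :|: A p.
Proof. by rewrite /cover -cats1 big_cat big_seq1. Qed.

Lemma sub_cover S p : p \in S -> A p \subset cover S.
Proof.
by move=> pS; apply/subsetP => x xAp; rewrite in_bigcup_seq; apply/hasP; exists p.
Qed.

Lemma cardU_cover_le (B : {set X}) (O : seq T) :
  (#|B :|: cover O| + size O * #|B| <= #|B| + \sum_(o <- O) #|B :|: A o|)%N.
Proof.
elim: O => [|o O IH]; first by rewrite cover_nil setU0 big_nil mul0n.
rewrite big_cons /=.
have coverE : B :|: cover (o :: O) = (B :|: cover O) :|: (B :|: A o).
  by apply/setP => x; rewrite /cover big_cons -/(cover O) !inE; do !case: (_ \in _).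
have capB : (#|B| <= #|(B :|: cover O) :&: (B :|: A o)|)%N.
  by apply: subset_leq_card; rewrite subsetI !subsetUl.
move: (cardsUI (B :|: cover O) (B :|: A o)); rewrite -coverE; lia.
Qed.

Context {R : realType} (c : R).
Hypothesis c_ge0 : 0 <= c.
Local Notation cov S := (c * #|cover S|%:R).

Lemma greedy_gain (S O : seq T) (p : T) :
  (forall o, o \in O -> o \notin S -> cov (rcons S o) <= cov (rcons S p)) ->
  cov O + (size O)%:R * cov S <= cov S + (size O)%:R * cov (rcons S p).
Proof.
move=> greedy.
have sum_gain :
    cov O + (size O)%:R * cov S <= cov S + \sum_(o <- O) cov (rcons S o).
  rewrite -mulr_sumr mulrCA -!mulrDr ler_wpM2l // -natr_sum -!natrM -!natrD.
  under eq_bigr do rewrite cover_rcons.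
  rewrite ler_nat; apply: leq_trans (cardU_cover_le (cover S) O).
  by rewrite leq_add2r subset_leq_card ?subsetUr.
apply: le_trans sum_gain _; rewrite lerD2l.
have -> : forall y : R, (size O)%:R * y = \sum_(o <- O) y.
  by move=> y; rewrite big_const_seq count_predT iter_addr_0 mulr_natl.
rewrite big_seq [X in _ <= X]big_seq; apply: ler_sum => o oO.
have [oS|] := boolP (o \in S); last exact: greedy.
have /setUidPl A_o_covered : A o \subset cover S by exact: sub_cover.
rewrite cover_rcons A_o_covered.
by rewrite ler_wpM2l // ler_nat cover_rcons subset_leq_card ?subsetUl.
Qed.

End Coverage.

Definition row_cells {col : finType} {V : eqType} {n : nat}
    (tab : 'I_n -> {ffun col -> V}) (rs : seq (rule col V)) (Us : {set col})
    (p : {ffun col -> option V}) : {set 'I_n * col} :=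
  \bigcup_(r <- rs | (UR r \subset Us) && holds_sub r p) cell tab r.

Section CellCoverage.
Context {col : finType} {V : eqType} {n : nat}.
Context {tab : 'I_n -> {ffun col -> V}} {rs : seq (rule col V)}.

Lemma bigcup_covered_cover (Us : {set col}) (S : seq {ffun col -> option V}) :
  \bigcup_(r <- rs | covered r Us S) cell tab r = cover (row_cells tab rs Us) S.
Proof.
apply/setP => x; rewrite !in_bigcup_seq.
under [RHS]eq_has do rewrite in_bigcup_seq.
rewrite has_comm; apply: eq_has => r /=; rewrite /covered.
elim: S => [|p S IH] /=; first by rewrite andbF.
rewrite -IH; case: (UR r \subset Us); case: (holds_sub r p); case: (x \in cell tab r);
  by rewrite /= ?andbT ?andbF ?orbF.
Qed.

Lemma cellCovE (R : realType) (Us : {set col}) (S : seq {ffun col -> option V}) :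
  cellCov R tab rs Us S =
  (#|\bigcup_(r <- rs) cell tab r|%:R)^-1 * #|cover (row_cells tab rs Us) S|%:R.
Proof. by rewrite /cellCov bigcup_covered_cover mulrC. Qed.

Lemma cellCov_ge0 (R : realType) (Us : {set col}) (S : seq {ffun col -> option V}) :
  0 <= cellCov R tab rs Us S.
Proof. exact: divr_ge0. Qed.

Lemma greedy_run_approx (R : realType) (k : nat) (Us : {set col})
    (rows O : seq {ffun col -> option V}) :
  greedy_run R tab rs k Us rows -> size O = k -> {subset O <= projT tab Us} ->
  (1 - (expR 1)^-1) * cellCov R tab rs Us O <= cellCov R tab rs Us rows.
Proof.
move=> [size_rows greedy] size_O O_proj.
have [k0 | k_gt0] := posnP k.
  move: size_O; rewrite k0 => /size0nil ->.
  by rewrite cellCovE cover_nil cards0 !mulr0 cellCov_ge0.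
rewrite -(take_size rows) size_rows.
apply: (@greedy_recurrence_bound _ _ _ (fun i => cellCov R tab rs Us (take i rows)))
  => //; first exact: cellCov_ge0.
  by rewrite take0 cellCovE cover_nil cards0 mulr0.
move=> i lt_ik; have [p_proj p_fresh p_max] := greedy i lt_ik.
rewrite (take_nth [ffun => None]) ?size_rows // !cellCovE -size_O.
apply: greedy_gain => [|o oO oS]; first by rewrite invr_ge0.
by rewrite -!cellCovE p_max ?O_proj.
Qed.

Lemma greedy_run_subtable (R : realType) (k l : nat) (Us : {set col})
    (rows : seq {ffun col -> option V}) :
  feasible_cols tab k l Us -> greedy_run R tab rs k Us rows ->
  is_subtable tab k l Us rows.
Proof.
move=> /andP[/eqP card_Us _] [size_rows greedy]; split => //.
  apply: (@uniq_nth_notin_take _ [ffun => None]) => i.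
  by rewrite size_rows => /greedy[].
move=> p p_row; have lt_ik : (index p rows < k)%N by rewrite -size_rows index_mem.
have [] := greedy _ lt_ik; rewrite nth_index // => /mapP[i _ ->] _ _.
by exists i.
Qed.

Lemma subtable_feasible (k l : nat) (Us : {set col})
    (rows : seq {ffun col -> option V}) :
  is_subtable tab k l Us rows -> feasible_cols tab k l Us.
Proof.
move=> [card_Us uniq_rows size_rows rows_proj].
rewrite /feasible_cols card_Us eqxx -size_rows uniq_leq_size // => p.
by move=> /rows_proj[i ->]; rewrite mem_undup; apply: map_f; rewrite mem_enum.
Qed.

End CellCoverage.

Theorem proposition4p3 (R : realType) (col : finType) (V : eqType) (n : nat)
  (tab : 'I_n -> {ffun col -> V}) (tab_inj : injective tab)
  (rs : seq (rule col V)) (k l : nat) (hl : (l <= #|col|)%N)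
  (run : {set col} -> seq {ffun col -> option V})
  (hrun : forall Us, feasible_cols tab k l Us -> greedy_run R tab rs k Us (run Us))
  (Uo : {set col}) (hUo : feasible_cols tab k l Uo)
  (hmax : forall Us, feasible_cols tab k l Us ->
            cellCov R tab rs Us (run Us) <= cellCov R tab rs Uo (run Uo)) :
  is_subtable tab k l Uo (run Uo) /\
  forall (Us : {set col}) (rows : seq {ffun col -> option V}),
    is_subtable tab k l Us rows ->
    (1 - (expR 1)^-1) * cellCov R tab rs Us rows <= cellCov R tab rs Uo (run Uo).
Proof.
split; first exact: greedy_run_subtable (hrun _ hUo).
move=> Us rows sub; have feas := subtable_feasible sub.
apply: le_trans (hmax _ feas); case: sub => _ _ size_rows rows_proj.
apply: greedy_run_approx (hrun _ feas) size_rows _ => p /rows_proj[i ->].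
by apply: map_f; rewrite mem_enum.
Qed.
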